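(* Fix $c\in\mathcal{C}'$ with $\mathcal{S}(c)\setminus\{c\}\neq\emptyset$ and fix the values of all messages other than the block $\boldsymbol\lambda_{c,\mathcal{S}(c)}=(\lambda_{c\to s}(\mathbf{x}_s))_{s\in\mathcal{S}(c)\setminus\{c\}}$. For an arbitrary choice of this block, let $(b_c,(b_s)_{s\in\mathcal{S}(c)\setminus\{c\}})$ be the resulting beliefs, and let $(b^*_c,(b^*_s)_{s\in\mathcal{S}(c)\setminus\{c\}})$ be the beliefs obtained when the block is replaced by $\boldsymbol\lambda^*_{c,\mathcal{S}(c)}$. Then $$b^*_s(\mathbf{x}_s)=\frac{1}{|\mathcal{S}(c)\setminus\{c\}|}\max_{\mathbf{x}_{c\setminus s}}\Big[b_c(\mathbf{x}_c)+\sum_{\hat s\in\mathcal{S}(c)\setminus\{c\}}b_{\hat s}(\mathbf{x}_{\hat s})\Big]\quad\forall s\in\mathcal{S}(c)\setminus\{c\},\ \mathbf{x}_s,$$ $$b^*_c(\mathbf{x}_c)=b_c(\mathbf{x}_c)+\sum_{\hat s\in\mathcal{S}(c)\setminus\{c\}}b_{\hat s}(\mathbf{x}_{\hat s})-\sum_{\hat s\in\mathcal{S}(c)\setminus\{c\}}b^*_{\hat s}(\mathbf{x}_{\hat s})\quad\forall\mathbf{x}_c.$$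
   Context: Let $\mathcal{V}=\{1,\dots,n\}$; each variable $x_i$ takes values in a finite set, $\mathbf{x}_s=(x_i)_{i\in s}$ for $s\subseteq\mathcal{V}$. Let $\mathcal{C}$ be a collection of subsets of $\mathcal{V}$ with real potentials $\theta_c(\mathbf{x}_c)$. Let $\mathcal{C}'$ be a collection of subsets of $\mathcal{V}$ and for each $c\in\mathcal{C}'$ let $\mathcal{S}(c)$ be a collection of subsets of $c$ (possibly containing $c$), with $\mathcal{C}'\cup\bigcup_c\mathcal{S}(c)\supseteq\mathcal{C}$; put $\mathcal{T}=\mathcal{C}'\cup\bigcup_{c\in\mathcal{C}'}\mathcal{S}(c)$. Messages are reals $\lambda_{c\to s}(\mathbf{x}_s)$, $c\in\mathcal{C}'$, $s\in\mathcal{S}(c)\setminus\{c\}$. For $t\in\mathcal{T}$: $\hat\theta_t=\mathbb{1}(t\in\mathcal{C})\theta_t$; $\gamma_t(\mathbf{x}_t)=\mathbb{1}(t\in\mathcal{C}')\sum_{\hat s\in\mathcal{S}(t)\setminus\{t\}}\lambda_{t\to\hat s}(\mathbf{x}_{\hat s})$; $\lambda_t(\mathbf{x}_t)=\sum_{c'\in\mathcal{C}':\,t\in\mathcal{S}(c')\setminus\{c'\}}\lambda_{c'\to t}(\mathbf{x}_t)$; beliefs $b_t=\hat\theta_t+\lambda_t-\gamma_t$. For $s\in\mathcal{S}(c)\setminus\{c\}$, $\lambda_s^{-c}(\mathbf{x}_s)=\sum_{\hat c\in\mathcal{C}':\,\hat c\ne c,\ s\in\mathcal{S}(\hat c)\setminus\{\hat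 c\}}\lambda_{\hat c\to s}(\mathbf{x}_s)$ (these and $\lambda_c,\gamma_s$ do not depend on the block). The updated block is $\lambda^*_{c\to s}(\mathbf{x}_s)=-\hat\theta_s(\mathbf{x}_s)+\gamma_s(\mathbf{x}_s)-\lambda_s^{-c}(\mathbf{x}_s)+\frac{1}{|\mathcal{S}(c)\setminus\{c\}|}\max_{\mathbf{x}_{c\setminus s}}[\hat\theta_c(\mathbf{x}_c)+\lambda_c(\mathbf{x}_c)+\sum_{\hat s\in\mathcal{S}(c)\setminus\{c\}}(\hat\theta_{\hat s}-\gamma_{\hat s}+\lambda^{-c}_{\hat s})(\mathbf{x}_{\hat s})]$. *)

From HB Require Import structures.
From mathcomp Require Import all_boot all_order all_algebra.
Set Implicit Arguments. Unset Strict Implicit. Unset Printing Implicit Defensive.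
Import Order.TTheory GRing.Theory Num.Theory.
Local Open Scope ring_scope.

(* Variables are 'I_n; variable i takes values in the finite type D i.
   A function of x_s is represented as a function of full assignments
   that only depends on the coordinates in s (see [depends_only]). *)
Definition assign (n : nat) (D : 'I_n -> finType) := {dffun forall i : 'I_n, D i}.

Section Defs.
Variables (R : realFieldType) (n : nat) (D : 'I_n -> finType).
Local Notation A := (assign D).
Variables (C C' : {set {set 'I_n}}) (S : {set 'I_n} -> {set {set 'I_n}}).
Variable theta : {set 'I_n} -> A -> R.
(* lam c s x = lambda_{c -> s}(x_s) *)
Variable lam : {set 'I_n} -> {set 'I_n} -> A -> R.

Definition depends_only (s : {set 'I_n}) (f : A -> R) :=
  forall x y : A, (forall i, i \in s -> x i = y i) -> f x = f y.

(* max over x_{c \ s} of F, the other coordinates being those of x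
   (the set of such y is nonempty: it contains x). *)
Definition max_over (c s : {set 'I_n}) (F : A -> R) (x : A) : R :=
  \big[Num.max/F x]_(y : A | [forall i, (i \notin c :\: s) ==> (y i == x i)]) F y.

Definition thetahat (t : {set 'I_n}) (x : A) : R :=
  if t \in C then theta t x else 0.

Definition gamma (t : {set 'I_n}) (x : A) : R :=
  if t \in C' then \sum_(sh in S t :\ t) lam t sh x else 0.

Definition lam_in (t : {set 'I_n}) (x : A) : R :=
  \sum_(c' in C' | t \in S c' :\ c') lam c' t x.

Definition belief (t : {set 'I_n}) (x : A) : R :=
  thetahat t x + lam_in t x - gamma t x.

Definition lam_minus (c s : {set 'I_n}) (x : A) : R :=
  \sum_(ch in C' | (ch != c) && (s \in S ch :\ ch)) lam ch s x.

Definition lam_star (c s : {set 'I_n}) (x : A) : R :=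
  - thetahat s x + gamma s x - lam_minus c s x
  + (#|S c :\ c|%:R)^-1 *
    max_over c s (fun y => thetahat c y + lam_in c y
       + \sum_(sh in S c :\ c) (thetahat sh y - gamma sh y + lam_minus c sh y)) x.

End Defs.

Definition replace_block (n : nat) (T : Type) (S : {set 'I_n} -> {set {set 'I_n}})
  (lam : {set 'I_n} -> {set 'I_n} -> T) (c : {set 'I_n}) (blk : {set 'I_n} -> T) :=
  fun c' s => if (c' == c) && (s \in S c :\ c) then blk s else lam c' s.

From HB Require Import structures.
From mathcomp Require Import all_boot all_order all_algebra ring.
Import Order.TTheory GRing.Theory Num.Theory.
Local Open Scope ring_scope.

Set Implicit Arguments.
Unset Strict Implicit.

(* Replacing the block of messages out of c changes no incoming message of c
   and no outgoing message of any s in S(c) \ {c}; so the new beliefs differ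
   from the old ones only through the block itself.  Since lam_star is
   obtained by solving b'_s = (max ...) / |S(c) \ {c}| for the block, the
   first identity holds by construction, and the second one follows because
   b_c + sum_s b_s does not depend on the block at all. *)

Lemma eq_max_over (R : realFieldType) (n : nat) (D : 'I_n -> finType)
    (c s : {set 'I_n}) (F G : assign D -> R) :
  F =1 G -> max_over c s F =1 max_over c s G.
Proof. by move=> eqFG x; rewrite /max_over eqFG; apply: eq_bigr. Qed.

Section ReplaceBlock.
Variables (R : realFieldType) (n : nat) (D : 'I_n -> finType).
Variables (C C' : {set {set 'I_n}}) (S : {set 'I_n} -> {set {set 'I_n}}).
Variables (theta : {set 'I_n} -> assign D -> R).
Variables (lam : {set 'I_n} -> {set 'I_n} -> assign D -> R).
Variables (c : {set 'I_n}) (blk : {set 'I_n} -> assign D -> R).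
Hypothesis cC' : c \in C'.

Local Notation K := (S c :\ c).
Local Notation lam' := (replace_block S lam c blk).

Lemma lam_in_split (L : {set 'I_n} -> {set 'I_n} -> assign D -> R) s x :
  s \in K -> lam_in C' S L s x = L c s x + lam_minus C' S L c s x.
Proof.
move=> sK; rewrite /lam_in (bigD1 c) /= ?cC' ?sK //; congr (_ + _).
apply: eq_bigl => ch.
by case: (ch \in C'); case: (ch != c); case: (s \in S ch :\ ch).
Qed.

Lemma lam_minus_replace_block s x :
  lam_minus C' S lam' c s x = lam_minus C' S lam c s x.
Proof.
apply: eq_bigr => ch /andP[_ /andP[ch_c _]].
by rewrite /replace_block (negbTE ch_c).
Qed.

Lemma gamma_replace_block s x :
  s != c -> gamma C' S lam' s x = gamma C' S lam s x.
Proof.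
move=> sc; rewrite /gamma; case: (s \in C') => //.
by apply: eq_bigr => sh _; rewrite /replace_block (negbTE sc).
Qed.

Lemma gamma_replace_block_self x :
  gamma C' S lam' c x = \sum_(sh in K) blk sh x.
Proof.
by rewrite /gamma cC'; apply: eq_bigr => sh shK; rewrite /replace_block eqxx shK.
Qed.

Lemma lam_in_replace_block_self x :
  lam_in C' S lam' c x = lam_in C' S lam c x.
Proof.
apply: eq_bigr => c' _.
by rewrite /replace_block setD11 andbF.
Qed.

Lemma belief_replace_block s x : s \in K ->
  belief C C' S theta lam' s x
  = thetahat C theta s x - gamma C' S lam s x + lam_minus C' S lam c s x + blk s x.
Proof.
move=> sK; have sc : s != c by move: sK; rewrite in_setD1 => /andP[].
rewrite /belief lam_in_split // lam_minus_replace_block gamma_replace_block //.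
by rewrite /replace_block eqxx sK /=; ring.
Qed.

Lemma belief_replace_block_self x :
  belief C C' S theta lam' c x
  = thetahat C theta c x + lam_in C' S lam c x - \sum_(sh in K) blk sh x.
Proof. by rewrite /belief lam_in_replace_block_self gamma_replace_block_self. Qed.

Lemma belief_objective x :
  belief C C' S theta lam c x + \sum_(sh in K) belief C C' S theta lam sh x
  = thetahat C theta c x + lam_in C' S lam c x
    + \sum_(sh in K) (thetahat C theta sh x - gamma C' S lam sh x
                      + lam_minus C' S lam c sh x).
Proof.
have -> : \sum_(sh in K) belief C C' S theta lam sh x
  = \sum_(sh in K) (thetahat C theta sh x - gamma C' S lam sh x
                    + lam_minus C' S lam c sh x) + \sum_(sh in K) lam c sh x.
  by rewrite -big_split /=; apply: eq_bigr => sh shK; rewrite /belief lam_in_split //; ring.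
by rewrite {1}/belief {1}/gamma cC'; ring.
Qed.

End ReplaceBlock.

Theorem proposition6 (R : realFieldType) (n : nat) (D : 'I_n -> finType)
  (C C' : {set {set 'I_n}}) (S : {set 'I_n} -> {set {set 'I_n}})
  (theta : {set 'I_n} -> assign D -> R)
  (lam : {set 'I_n} -> {set 'I_n} -> assign D -> R)
  (c : {set 'I_n}) :
  (forall c0, c0 \in C' -> forall s, s \in S c0 -> s \subset c0) ->
  C \subset C' :|: \bigcup_(c0 in C') S c0 ->
  (forall t, t \in C -> depends_only t (theta t)) ->
  (forall c0, c0 \in C' -> forall s, s \in S c0 :\ c0 -> depends_only s (lam c0 s)) ->
  c \in C' ->
  S c :\ c != set0 ->
  let lam' := replace_block S lam c (lam_star C C' S theta lam c) in
  let b := belief C C' S theta lam in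
  let b' := belief C C' S theta lam' in
  (forall s, s \in S c :\ c -> forall x : assign D,
     b' s x = (#|S c :\ c|%:R)^-1 *
       max_over c s (fun y => b c y + \sum_(sh in S c :\ c) b sh y) x) /\
  (forall x : assign D,
     b' c x = b c x + \sum_(sh in S c :\ c) b sh x - \sum_(sh in S c :\ c) b' sh x).
Proof.
move=> _ _ _ _ cC' _ lam' b b'.
have objE y := belief_objective C S theta lam cC' y.
split=> [s sK x|x].
  rewrite /b' belief_replace_block // /lam_star (eq_max_over _ _ objE) /b.
  by ring.
rewrite /b' belief_replace_block_self // objE.
under [X in _ = _ - X]eq_bigr => sh shK do rewrite belief_replace_block //.
by rewrite !big_split /= !sumrN; ring.
Qed.
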